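(* Let $\mathbb U=(\mathbb U_{lk})_{l,k=3}^{N_1-1}$ with $$\mathbb U_{lk}=\frac{1}{1+p_0}\int_0^{L}\tilde s\,\tilde\Theta_l'(\tilde s)\,\tilde\Theta_k(\tilde s)\,d\tilde s,$$ and let $\mathbb D=\mathrm{diag}(\beta_3^2,\beta_4^2,\dots,\beta_{N_1-1}^2)$. Then $\|\mathbb U^T\|_{\ell^2_*}\lesssim\|\mathbb D^{1/2}\|_{\ell^2_*}$, where $\|\cdot\|_{\ell^2_*}$ is the operator norm on $\ell^2$ and the implied constant is independent of $N_1$.
   Context: Fix $R_0>0$, an integer $N_1\ge4$ and $p_0>-1/2$; let $L=2\pi R_0(1+p_0)$. Let $\Theta_0=(2\pi R_0)^{-1/2}$ and, for $k\ge1$, $\Theta_{2k-1}(s)=(2\pi R_0)^{-1/2}\cos(ks/R_0)$, $\Theta_{2k}(s)=(2\pi R_0)^{-1/2}\sin(ks/R_0)$, with $\beta_0=0$, $\beta_{2k-1}=\beta_{2k}=k$. Define $\tilde\Theta_k(\tilde s)=\Theta_k(2\pi R_0\tilde s/L)$ for $\tilde s\in[0,L]$ (so $\int_0^L\tilde\Theta_j\tilde\Theta_k\,d\tilde s=(1+p_0)\delta_{jk}$), and primes denote $d/d\tilde s$. *)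

From Stdlib Require Import Reals Lra Lia.
From Coquelicot Require Import Coquelicot.
Open Scope R_scope.

Definition beta (k : nat) : nat := Nat.div (S k) 2.

Definition Theta (R0 : R) (k : nat) (s : R) : R :=
  match k with
  | O => / sqrt (2 * PI * R0)
  | _ => if Nat.odd k
         then / sqrt (2 * PI * R0) * cos (INR (beta k) * s / R0)
         else / sqrt (2 * PI * R0) * sin (INR (beta k) * s / R0)
  end.

Definition Lc (R0 p0 : R) : R := 2 * PI * R0 * (1 + p0).

Definition Thetat (R0 p0 : R) (k : nat) (st : R) : R :=
  Theta R0 k (2 * PI * R0 * st / Lc R0 p0).

Definition Umat (R0 p0 : R) (l k : nat) : R :=
  / (1 + p0) *
  RInt (fun st => st * Derive (Thetat R0 p0 l) st * Thetat R0 p0 k st) 0 (Lc R0 p0).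

Definition UTmat (R0 p0 : R) (i j : nat) : R := Umat R0 p0 j i.

Definition Dhalf (i j : nat) : R := if Nat.eqb i j then INR (beta i) else 0.

(* Matrices/vectors are indexed by 3 .. N1-1; entries outside are ignored. *)
Definition vnorm (N1 : nat) (x : nat -> R) : R :=
  sqrt (sum_n_m (fun i => x i ^ 2) 3 (N1 - 1)).

Definition matvec (N1 : nat) (A : nat -> nat -> R) (x : nat -> R) : nat -> R :=
  fun i => sum_n_m (fun j => A i j * x j) 3 (N1 - 1).

Definition opnorm (N1 : nat) (A : nat -> nat -> R) : Rbar :=
  Lub_Rbar (fun r => exists x : nat -> R,
                       vnorm N1 x <= 1 /\ r = vnorm N1 (matvec N1 A x)).

(* Differentiating Thetat_k gives beta_k (2 pi / L) Thetat_conj_k, where Thetat_conj swaps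
   cos for -sin and sin for cos.  Hence (U^T x)_i is (2 pi / L) / (1 + p0) times the i-th
   Fourier coefficient of t * g(t), with g = sum_j beta_j x_j Thetat_conj_j.  Both Thetat and
   Thetat_conj are orthogonal systems on [0, L], so Bessel's inequality, |t| <= L and
   Parseval's identity for g give |U^T x| <= pi |D^{1/2} x| for every x, and the operator
   norm of U^T is at most pi times that of D^{1/2}, whatever N1. *)

From Stdlib Require Import Reals Lra Lia Bool.
From Coquelicot Require Import Coquelicot.
Open Scope R_scope.

Lemma sum_n_m_ind (P : nat -> nat -> Prop) :
  (forall m n, (n < m)%nat -> P m n) ->
  (forall m, P m m) ->
  (forall m n, (m <= n)%nat -> P m n -> P m (S n)) ->
  forall m n, P m n.
Proof.
  intros Hempty Hsingle Hstep m n; induction n as [|n IH].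
  - destruct m; [apply Hsingle | apply Hempty; lia].
  - destruct (Compare_dec.le_lt_dec m n) as [Hmn|Hnm]; [now apply Hstep|].
    destruct (Nat.eq_dec m (S n)) as [->|]; [apply Hsingle | apply Hempty; lia].
Qed.

Lemma sum_n_m_Rmult_l (a : R) (u : nat -> R) m n :
  sum_n_m (fun k => a * u k) m n = a * sum_n_m u m n.
Proof. exact (sum_n_m_mult_l a u m n). Qed.

Lemma sum_n_m_kronecker (j : nat) (a : R) m n : (m <= j <= n)%nat ->
  sum_n_m (fun k => if Nat.eqb j k then a else 0) m n = a.
Proof.
  revert m n; apply (sum_n_m_ind (fun m n => (m <= j <= n)%nat -> _ = a)).
  - lia.
  - intros m Hj. rewrite sum_n_n. replace m with j by lia. now rewrite Nat.eqb_refl.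
  - intros m n Hmn IH Hj. rewrite sum_n_Sm by lia.
    destruct (Nat.eqb_spec j (S n)) as [->|Hne].
    + rewrite (sum_n_m_ext_loc _ (fun _ => zero)), sum_n_m_const_zero.
      * apply plus_zero_l.
      * intros k Hk. destruct (Nat.eqb_spec (S n) k); [lia | reflexivity].
    + rewrite IH by lia. apply Rplus_0_r.
Qed.

Lemma continuity_ext (f g : R -> R) :
  (forall t, f t = g t) -> continuity f -> continuity g.
Proof. intros Hfg Hf x. now apply (continuity_pt_ext f). Qed.

Lemma continuity_sum_n_m (F : nat -> R -> R) m n :
  (forall i, (m <= i <= n)%nat -> continuity (F i)) ->
  continuity (fun t => sum_n_m (fun i => F i t) m n).
Proof.
  revert m n; apply (sum_n_m_ind (fun m n => _ -> continuity _)).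
  - intros m n Hnm _. apply (continuity_ext (fun _ => 0)).
    + intros t. now rewrite sum_n_m_zero.
    + now apply continuity_const.
  - intros m HF. apply (continuity_ext (F m)); [intros t; now rewrite sum_n_n|].
    apply HF; lia.
  - intros m n Hmn IH HF.
    apply (continuity_ext (fun t => sum_n_m (fun i => F i t) m n + F (S n) t)).
    + intros t. now rewrite sum_n_Sm by lia.
    + apply continuity_plus; [apply IH; intros i Hi | ]; apply HF; lia.
Qed.

Lemma continuity_id : continuity (fun t => t).
Proof. apply derivable_continuous, derivable_id. Qed.

Definition trig (b : bool) (u t : R) : R := if b then cos (u * t) else sin (u * t).

Lemma continuity_trig b u : continuity (trig b u).
Proof.
  assert (Hlin : continuity (fun t => u * t)).
  { apply continuity_mult; [now apply continuity_const | apply continuity_id]. }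
  destruct b; [apply (continuity_comp _ cos) | apply (continuity_comp _ sin)];
    auto using continuity_cos, continuity_sin.
Qed.

Lemma continuity_pow2 (f : R -> R) : continuity f -> continuity (fun t => f t ^ 2).
Proof.
  intros Hf. apply (continuity_ext (fun t => f t * f t)); [intros; ring |].
  now apply continuity_mult.
Qed.

Ltac solve_continuity :=
  intros; repeat first
    [ apply continuity_trig
    | apply continuity_sum_n_m; intros
    | apply continuity_minus
    | apply continuity_plus
    | apply continuity_opp
    | apply continuity_pow2
    | apply continuity_mult
    | apply continuity_id
    | apply continuity_const; intros ? ?; reflexivity
    | assumption
    | match goal with
      | H : forall i, _ -> continuity (?F i) |- continuity (?F _) => apply H; lia
      end ].

Lemma ex_RInt_continuity (f : R -> R) a b : continuity f -> ex_RInt f a b.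
Proof.
  intros Hf. apply (ex_RInt_continuous (V := R_CompleteNormedModule)).
  intros z _. now apply continuity_pt_filterlim.
Qed.

Lemma RInt_plus_continuity (f g : R -> R) a b : continuity f -> continuity g ->
  RInt (fun t => f t + g t) a b = RInt f a b + RInt g a b.
Proof.
  intros Hf Hg. apply (RInt_plus (V := R_CompleteNormedModule)); now apply ex_RInt_continuity.
Qed.

Lemma RInt_scal_continuity (f : R -> R) l a b : continuity f ->
  RInt (fun t => l * f t) a b = l * RInt f a b.
Proof.
  intros Hf. apply (RInt_scal (V := R_CompleteNormedModule)); now apply ex_RInt_continuity.
Qed.

Lemma RInt_sum_n_m_scal (y : nat -> R) (F : nat -> R -> R) a b m n :
  (forall i, (m <= i <= n)%nat -> continuity (F i)) ->
  RInt (fun t => sum_n_m (fun i => y i * F i t) m n) a b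
  = sum_n_m (fun i => y i * RInt (F i) a b) m n.
Proof.
  revert m n; apply (sum_n_m_ind (fun m n => _ -> _ = _)).
  - intros m n Hnm _. rewrite sum_n_m_zero by lia.
    rewrite (RInt_ext _ (fun _ => zero)), RInt_const by (intros; now rewrite sum_n_m_zero).
    exact (Rmult_0_r (b - a)).
  - intros m HF. rewrite sum_n_n, <- RInt_scal_continuity by (apply HF; lia).
    apply RInt_ext. intros t _. apply (sum_n_n (fun i => y i * F i t)).
  - intros m n Hmn IH HF. rewrite sum_n_Sm by lia.
    rewrite (RInt_ext _ (fun t => sum_n_m (fun i => y i * F i t) m n + y (S n) * F (S n) t)).
    2:{ intros t _. now rewrite sum_n_Sm by lia. }
    assert (HF' : forall i, (m <= i <= n)%nat -> continuity (F i)) by (intros; apply HF; lia).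
    assert (HFn : continuity (F (S n))) by (apply HF; lia).
    now rewrite RInt_plus_continuity, IH, RInt_scal_continuity by solve_continuity.
Qed.

Lemma RInt_antiderivative (F f : R -> R) a b :
  (forall t, is_derive F t (f t)) -> continuity f -> RInt f a b = F b - F a.
Proof.
  intros HF Hf. apply is_RInt_unique, (is_RInt_derive F f).
  - intros t _. apply HF.
  - intros t _. now apply continuity_pt_filterlim.
Qed.

Record orthogonal_system (E : nat -> R -> R) (a b c : R) (m n : nat) : Prop := {
  orthogonal_system_continuity : forall i, (m <= i <= n)%nat -> continuity (E i);
  orthogonal_system_RInt : forall i j, (m <= i <= n)%nat -> (m <= j <= n)%nat ->
    RInt (fun t => E i t * E j t) a b = if Nat.eqb i j then c else 0 }.

Arguments orthogonal_system_continuity {E a b c m n}.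
Arguments orthogonal_system_RInt {E a b c m n}.

Section OrthogonalSystem.

Variables (E : nat -> R -> R) (a b c : R) (m n : nat).
Hypothesis HE : orthogonal_system E a b c m n.

Lemma RInt_mul_comb_orthogonal (y : nat -> R) i : (m <= i <= n)%nat ->
  RInt (fun t => E i t * sum_n_m (fun k => y k * E k t) m n) a b = c * y i.
Proof.
  intros Hi. pose proof (orthogonal_system_continuity HE) as HEc.
  rewrite (RInt_ext _ (fun t => sum_n_m (fun k => y k * (E i t * E k t)) m n)).
  2:{ intros t _. rewrite <- sum_n_m_Rmult_l. apply sum_n_m_ext. intros k. simpl. ring. }
  rewrite RInt_sum_n_m_scal by solve_continuity.
  rewrite (sum_n_m_ext_loc _ (fun k => if Nat.eqb i k then c * y i else 0)).
  - now apply sum_n_m_kronecker.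
  - intros k Hk. rewrite (orthogonal_system_RInt HE) by lia.
    simpl. destruct (Nat.eqb_spec i k) as [->|]; ring.
Qed.

Lemma RInt_sqr_comb_orthogonal (y : nat -> R) :
  RInt (fun t => sum_n_m (fun i => y i * E i t) m n ^ 2) a b
  = c * sum_n_m (fun i => y i ^ 2) m n.
Proof.
  pose proof (orthogonal_system_continuity HE) as HEc.
  rewrite (RInt_ext _ (fun t => sum_n_m (fun i =>
             y i * (E i t * sum_n_m (fun k => y k * E k t) m n)) m n)).
  2:{ intros t _. simpl pow. rewrite Rmult_1_r, <- sum_n_m_Rmult_l.
      apply sum_n_m_ext. intros i. simpl. ring. }
  rewrite RInt_sum_n_m_scal by solve_continuity.
  rewrite <- sum_n_m_Rmult_l. apply sum_n_m_ext_loc. intros i Hi.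
  rewrite RInt_mul_comb_orthogonal by assumption. simpl. ring.
Qed.

Lemma bessel_inequality (h : R -> R) : a <= b -> 0 < c -> continuity h ->
  sum_n_m (fun i => RInt (fun t => h t * E i t) a b ^ 2) m n
  <= c * RInt (fun t => h t ^ 2) a b.
Proof.
  intros Hab Hc Hh. pose proof (orthogonal_system_continuity HE) as HEc.
  set (y := fun i => RInt (fun t => h t * E i t) a b).
  assert (Hcross : RInt (fun t => h t * sum_n_m (fun i => y i * E i t) m n) a b
                   = sum_n_m (fun i => y i ^ 2) m n).
  { rewrite (RInt_ext _ (fun t => sum_n_m (fun i => y i * (h t * E i t)) m n)).
    2:{ intros t _. rewrite <- sum_n_m_Rmult_l. apply sum_n_m_ext. intros i. simpl. ring. }
    rewrite RInt_sum_n_m_scal by solve_continuity.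
    apply sum_n_m_ext. intros i. unfold y. simpl. ring. }
  assert (Hsq := RInt_sqr_comb_orthogonal y).
  assert (Hdev : 0 <= RInt (fun t => (c * h t - sum_n_m (fun i => y i * E i t) m n) ^ 2) a b).
  { apply RInt_ge_0; [assumption | apply ex_RInt_continuity; solve_continuity |].
    intros t _. apply pow2_ge_0. }
  rewrite (RInt_ext _ (fun t =>
             (c ^ 2 * h t ^ 2 + (-2 * c) * (h t * sum_n_m (fun i => y i * E i t) m n))
             + sum_n_m (fun i => y i * E i t) m n ^ 2)) in Hdev
    by (intros; simpl; ring).
  rewrite !RInt_plus_continuity, !RInt_scal_continuity, Hcross, Hsq in Hdev
    by solve_continuity.
  change (sum_n_m (fun i => y i ^ 2) m n <= c * RInt (fun t => h t ^ 2) a b).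
  nra.
Qed.

End OrthogonalSystem.

Lemma sum_sqr_RInt_moment_le (E F : nat -> R -> R) (L cE cF : R) m n m' n' (z : nat -> R) :
  0 <= L -> 0 < cE ->
  orthogonal_system E 0 L cE m n -> orthogonal_system F 0 L cF m' n' ->
  sum_n_m (fun i =>
    RInt (fun t => t * sum_n_m (fun j => z j * F j t) m' n' * E i t) 0 L ^ 2) m n
  <= cE * cF * L ^ 2 * sum_n_m (fun j => z j ^ 2) m' n'.
Proof.
  intros HL HcE HE HF. pose proof (orthogonal_system_continuity HF) as HFc.
  assert (Hg : continuity (fun t => sum_n_m (fun j => z j * F j t) m' n'))
    by solve_continuity.
  assert (Hmoment : RInt (fun t => (t * sum_n_m (fun j => z j * F j t) m' n') ^ 2) 0 L
                    <= L ^ 2 * RInt (fun t => sum_n_m (fun j => z j * F j t) m' n' ^ 2) 0 L).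
  { rewrite <- RInt_scal_continuity by solve_continuity.
    apply RInt_le; [assumption | apply ex_RInt_continuity; solve_continuity.. |].
    intros t Ht. rewrite Rpow_mult_distr.
    apply Rmult_le_compat_r; [apply pow2_ge_0 | apply pow_incr; lra]. }
  rewrite (RInt_sqr_comb_orthogonal F 0 L cF m' n' HF) in Hmoment.
  eapply Rle_trans.
  - apply (bessel_inequality E 0 L cE m n HE (fun t => t * sum_n_m (fun j => z j * F j t) m' n'));
      [assumption | assumption | solve_continuity].
  - replace (cE * cF * L ^ 2 * sum_n_m (fun j => z j ^ 2) m' n')
      with (cE * (L ^ 2 * (cF * sum_n_m (fun j => z j ^ 2) m' n'))) by ring.
    apply Rmult_le_compat_l; lra.
Qed.

Lemma RInt_trig_mul_same (L u : R) b1 b2 : u <> 0 -> sin (u * L) = 0 ->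
  RInt (fun t => trig b1 u t * trig b2 u t) 0 L = if Bool.eqb b1 b2 then L / 2 else 0.
Proof.
  intros Hu Hend.
  assert (Hpyth : forall t, sin (u * t) ^ 2 + cos (u * t) ^ 2 = 1).
  { intros t. rewrite <- !Rsqr_pow2. apply sin2_cos2. }
  destruct b1, b2; cbv beta iota delta [Bool.eqb].
  2, 3: rewrite (RInt_antiderivative (fun t => sin (u * t) ^ 2 / (2 * u)));
    [ rewrite Hend, Rmult_0_r, sin_0; simpl; field; exact Hu
    | intros t; unfold trig; auto_derive; [easy | field; exact Hu]
    | solve_continuity ].
  - rewrite (RInt_antiderivative (fun t => t / 2 + sin (u * t) * cos (u * t) / (2 * u)));
      [| intros t; unfold trig; auto_derive; [easy|] | solve_continuity].
    + rewrite Hend, Rmult_0_r, sin_0. simpl. field. exact Hu.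
    + pose proof (Hpyth t). field_simplify_eq; [nra | exact Hu].
  - rewrite (RInt_antiderivative (fun t => t / 2 - sin (u * t) * cos (u * t) / (2 * u)));
      [| intros t; unfold trig; auto_derive; [easy|] | solve_continuity].
    + rewrite Hend, Rmult_0_r, sin_0. simpl. field. exact Hu.
    + pose proof (Hpyth t). field_simplify_eq; [nra | exact Hu].
Qed.

Lemma RInt_trig_mul_distinct (L u v : R) b1 b2 : u * u <> v * v ->
  sin (u * L) = 0 -> cos (u * L) = 1 -> sin (v * L) = 0 -> cos (v * L) = 1 ->
  RInt (fun t => trig b1 u t * trig b2 v t) 0 L = 0.
Proof.
  intros Huv Hsu Hcu Hsv Hcv.
  assert (Hvu : v * v - u * u <> 0) by lra.
  apply Rminus_eq_contra in Huv.
  destruct b1, b2.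
  - rewrite (RInt_antiderivative (fun t =>
      (u * sin (u * t) * cos (v * t) - v * cos (u * t) * sin (v * t)) / (u * u - v * v)));
      [| intros t; unfold trig; auto_derive; [easy | field; exact Huv] | solve_continuity].
    rewrite Hsu, Hsv, !Rmult_0_r, sin_0. simpl. field. exact Huv.
  - rewrite (RInt_antiderivative (fun t =>
      (u * sin (u * t) * sin (v * t) + v * cos (u * t) * cos (v * t)) / (u * u - v * v)));
      [| intros t; unfold trig; auto_derive; [easy | field; exact Huv] | solve_continuity].
    rewrite Hsu, Hsv, Hcu, Hcv, !Rmult_0_r, sin_0, cos_0. simpl. field. exact Huv.
  - rewrite (RInt_antiderivative (fun t =>
      (v * sin (v * t) * sin (u * t) + u * cos (v * t) * cos (u * t)) / (v * v - u * u)));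
      [| intros t; unfold trig; auto_derive; [easy | field; exact Hvu] | solve_continuity].
    rewrite Hsu, Hsv, Hcu, Hcv, !Rmult_0_r, sin_0, cos_0. simpl. field. exact Hvu.
  - rewrite (RInt_antiderivative (fun t =>
      (v * sin (u * t) * cos (v * t) - u * cos (u * t) * sin (v * t)) / (u * u - v * v)));
      [| intros t; unfold trig; auto_derive; [easy | field; exact Huv] | solve_continuity].
    rewrite Hsu, Hsv, !Rmult_0_r, sin_0. simpl. field. exact Huv.
Qed.

Lemma RInt_trig_mul_harmonics (L : R) (k l : nat) b1 b2 :
  0 < L -> (1 <= k)%nat -> (1 <= l)%nat ->
  RInt (fun t => trig b1 (INR k * (2 * PI / L)) t * trig b2 (INR l * (2 * PI / L)) t) 0 L
  = if Bool.eqb b1 b2 && Nat.eqb k l then L / 2 else 0.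
Proof.
  intros HL Hk Hl.
  assert (Hω : 0 < 2 * PI / L) by (apply Rdiv_lt_0_compat; [pose proof PI_RGT_0 |]; lra).
  assert (Hfreq : forall j : nat, (1 <= j)%nat -> 0 < INR j * (2 * PI / L)).
  { intros j Hj. apply Rmult_lt_0_compat; [apply lt_0_INR; lia | exact Hω]. }
  assert (Hperiod : forall j : nat,
    sin (INR j * (2 * PI / L) * L) = 0 /\ cos (INR j * (2 * PI / L) * L) = 1).
  { intros j. replace (INR j * (2 * PI / L) * L) with (0 + 2 * INR j * PI) by (field; lra).
    now rewrite sin_period, cos_period, sin_0, cos_0. }
  destruct (Nat.eqb_spec k l) as [<-|Hkl].
  - rewrite andb_true_r. apply RInt_trig_mul_same.
    + apply Rgt_not_eq, Hfreq, Hk.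
    + apply Hperiod.
  - rewrite andb_false_r.
    apply RInt_trig_mul_distinct; try apply Hperiod.
    intros Hsq. apply Hkl, INR_eq, (Rmult_eq_reg_r (2 * PI / L)); [| lra].
    pose proof (Hfreq k Hk); pose proof (Hfreq l Hl). nra.
Qed.

Lemma trig_orthogonal_system (E : nat -> R -> R) (σ : nat -> R) (b : nat -> bool)
    (ν : nat -> nat) (L s : R) m n :
  0 < L ->
  (forall i j, b i = b j -> ν i = ν j -> i = j) ->
  (forall k, (m <= k <= n)%nat -> (1 <= ν k)%nat /\ σ k ^ 2 = s) ->
  (forall k t, (m <= k <= n)%nat ->
     E k t = σ k * trig (b k) (INR (ν k) * (2 * PI / L)) t) ->
  orthogonal_system E 0 L (s * (L / 2)) m n.
Proof.
  intros HL Hinj Hσν HE. split.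
  - intros k Hk. apply (continuity_ext (fun t => σ k * trig (b k) (INR (ν k) * (2 * PI / L)) t)).
    + intros t. symmetry. now apply HE.
    + solve_continuity.
  - intros i j Hi Hj.
    destruct (Hσν i Hi) as [Hνi Hσi]; destruct (Hσν j Hj) as [Hνj _].
    rewrite (RInt_ext _ (fun t => σ i * σ j * (trig (b i) (INR (ν i) * (2 * PI / L)) t
                                           * trig (b j) (INR (ν j) * (2 * PI / L)) t)))
      by (intros; rewrite !HE by assumption; simpl; ring).
    rewrite RInt_scal_continuity, RInt_trig_mul_harmonics by (assumption || solve_continuity).
    destruct (Nat.eqb_spec i j) as [<-|Hij].
    + rewrite eqb_reflx, Nat.eqb_refl, <- Hσi. simpl. ring.
    + destruct (Bool.eqb (b i) (b j)) eqn:Hb, (Nat.eqb_spec (ν i) (ν j)); simpl; try ring.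
      apply eqb_prop in Hb. now destruct Hij; apply Hinj.
Qed.

Lemma beta_pos k : (1 <= k)%nat -> (1 <= beta k)%nat.
Proof.
  intros Hk. unfold beta. rewrite <- Nat.div2_div.
  pose proof (Nat.div2_odd (S k)). destruct (Nat.odd (S k)); simpl in *; lia.
Qed.

Lemma beta_inj i j : Nat.odd i = Nat.odd j -> beta i = beta j -> i = j.
Proof.
  intros Hodd Hbeta. unfold beta in Hbeta. rewrite <- !Nat.div2_div in Hbeta.
  pose proof (Nat.div2_odd (S i)); pose proof (Nat.div2_odd (S j)).
  rewrite !Nat.odd_succ, <- !Nat.negb_odd, Hodd in *. lia.
Qed.

Definition Thetat_conj (R0 p0 : R) (k : nat) (t : R) : R :=
  (if Nat.odd k then - / sqrt (2 * PI * R0) else / sqrt (2 * PI * R0)) *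
  trig (negb (Nat.odd k)) (INR (beta k) * (2 * PI / Lc R0 p0)) t.

Lemma matvec_Dhalf N1 x i : (3 <= i <= N1 - 1)%nat ->
  matvec N1 Dhalf x i = INR (beta i) * x i.
Proof.
  intros Hi. unfold matvec, Dhalf.
  rewrite (sum_n_m_ext _ (fun j => if Nat.eqb i j then INR (beta i) * x i else 0)).
  - now apply sum_n_m_kronecker.
  - intros j. destruct (Nat.eqb_spec i j) as [<-|]; simpl; ring.
Qed.

Section Thetat.

Variables R0 p0 : R.
Hypothesis R0_pos : 0 < R0.
Hypothesis p0_gt : -1/2 < p0.

Lemma Lc_pos : 0 < Lc R0 p0.
Proof.
  unfold Lc. pose proof PI_RGT_0.
  apply Rmult_lt_0_compat; [apply Rmult_lt_0_compat |]; lra.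
Qed.

Lemma Thetat_trig k t : (1 <= k)%nat ->
  Thetat R0 p0 k t
  = / sqrt (2 * PI * R0) * trig (Nat.odd k) (INR (beta k) * (2 * PI / Lc R0 p0)) t.
Proof.
  intros Hk. pose proof Lc_pos.
  unfold Thetat, Theta, trig. destruct k as [|k]; [lia |].
  destruct (Nat.odd (S k)); do 2 f_equal; field; lra.
Qed.

Lemma continuity_Thetat k : continuity (Thetat R0 p0 k).
Proof.
  destruct k as [|k].
  - now apply continuity_const.
  - apply (continuity_ext (fun t => / sqrt (2 * PI * R0) *
             trig (Nat.odd (S k)) (INR (beta (S k)) * (2 * PI / Lc R0 p0)) t)).
    + intros t. symmetry. apply Thetat_trig. lia.
    + solve_continuity.
Qed.

Lemma Derive_Thetat k t : (1 <= k)%nat ->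
  Derive (Thetat R0 p0 k) t = INR (beta k) * (2 * PI / Lc R0 p0) * Thetat_conj R0 p0 k t.
Proof.
  intros Hk. rewrite (Derive_ext _ _ _ (fun t => Thetat_trig k t Hk)).
  apply is_derive_unique. unfold Thetat_conj, trig.
  destruct (Nat.odd k); simpl; (auto_derive; [easy | ring]).
Qed.

Lemma sqr_inv_sqrt_2PIR0 : (/ sqrt (2 * PI * R0)) ^ 2 = / (2 * PI * R0).
Proof.
  pose proof PI_RGT_0.
  rewrite pow_inv, pow2_sqrt; [reflexivity |].
  apply Rmult_le_pos; [apply Rmult_le_pos |]; lra.
Qed.

(* The paper states the squared norm as 1 + p0; with the factor (2 pi R0)^(-1/2) used for
   every k >= 1 it is (1 + p0) / 2. *)
Lemma Thetat_sqr_norm : / (2 * PI * R0) * (Lc R0 p0 / 2) = (1 + p0) / 2.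
Proof. pose proof PI_RGT_0. unfold Lc. field. lra. Qed.

Lemma Thetat_orthogonal m n : (1 <= m)%nat ->
  orthogonal_system (Thetat R0 p0) 0 (Lc R0 p0) ((1 + p0) / 2) m n.
Proof.
  intros Hm. rewrite <- Thetat_sqr_norm.
  apply (trig_orthogonal_system _ (fun _ => / sqrt (2 * PI * R0)) Nat.odd beta).
  - exact Lc_pos.
  - exact beta_inj.
  - intros k Hk. split; [apply beta_pos; lia | exact sqr_inv_sqrt_2PIR0].
  - intros k t Hk. apply Thetat_trig. lia.
Qed.

Lemma Thetat_conj_orthogonal m n : (1 <= m)%nat ->
  orthogonal_system (Thetat_conj R0 p0) 0 (Lc R0 p0) ((1 + p0) / 2) m n.
Proof.
  intros Hm. rewrite <- Thetat_sqr_norm.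
  apply (trig_orthogonal_system _
           (fun k => if Nat.odd k then - / sqrt (2 * PI * R0) else / sqrt (2 * PI * R0))
           (fun k => negb (Nat.odd k)) beta).
  - exact Lc_pos.
  - intros i j Hodd. apply beta_inj. now destruct (Nat.odd i), (Nat.odd j).
  - intros k Hk. split; [apply beta_pos; lia |].
    rewrite <- sqr_inv_sqrt_2PIR0. destruct (Nat.odd k); ring.
  - reflexivity.
Qed.

Lemma continuity_Thetat_conj k : continuity (Thetat_conj R0 p0 k).
Proof. unfold Thetat_conj. solve_continuity. Qed.

Lemma matvec_UTmat N1 x i :
  matvec N1 (UTmat R0 p0) x i
  = 2 * PI / Lc R0 p0 / (1 + p0) *
    RInt (fun t => t * sum_n_m (fun j => INR (beta j) * x j * Thetat_conj R0 p0 j t) 3 (N1 - 1)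
                   * Thetat R0 p0 i t) 0 (Lc R0 p0).
Proof.
  pose proof Lc_pos as HL.
  assert (HF : forall j, continuity (fun t => t * Thetat_conj R0 p0 j t * Thetat R0 p0 i t)).
  { intros j. pose proof (continuity_Thetat i); pose proof (continuity_Thetat_conj j).
    solve_continuity. }
  rewrite (RInt_ext _ (fun t => sum_n_m (fun j =>
             INR (beta j) * x j * (t * Thetat_conj R0 p0 j t * Thetat R0 p0 i t)) 3 (N1 - 1))).
  2:{ intros t _. transitivity (t * Thetat R0 p0 i t *
        sum_n_m (fun j => INR (beta j) * x j * Thetat_conj R0 p0 j t) 3 (N1 - 1)); [simpl; ring |].
      rewrite <- sum_n_m_Rmult_l. apply sum_n_m_ext. intros j. simpl. ring. }
  rewrite RInt_sum_n_m_scal by (intros; apply HF).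
  unfold matvec, UTmat, Umat. rewrite <- sum_n_m_Rmult_l. apply sum_n_m_ext_loc. intros j Hj.
  rewrite (RInt_ext _ (fun t => INR (beta j) * (2 * PI / Lc R0 p0) *
                                 (t * Thetat_conj R0 p0 j t * Thetat R0 p0 i t)))
    by (intros; rewrite Derive_Thetat by lia; simpl; ring).
  rewrite RInt_scal_continuity by apply HF. simpl. field. lra.
Qed.

Lemma sum_sqr_matvec_UTmat_le N1 x :
  sum_n_m (fun i => matvec N1 (UTmat R0 p0) x i ^ 2) 3 (N1 - 1)
  <= PI ^ 2 * sum_n_m (fun i => matvec N1 Dhalf x i ^ 2) 3 (N1 - 1).
Proof.
  pose proof Lc_pos as HL.
  rewrite (sum_n_m_ext _ (fun i => (2 * PI / Lc R0 p0 / (1 + p0)) ^ 2 *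
    RInt (fun t => t * sum_n_m (fun j => INR (beta j) * x j * Thetat_conj R0 p0 j t) 3 (N1 - 1)
                   * Thetat R0 p0 i t) 0 (Lc R0 p0) ^ 2))
    by (intros; now rewrite matvec_UTmat, Rpow_mult_distr).
  rewrite (sum_n_m_ext_loc (fun i => matvec N1 Dhalf x i ^ 2) (fun j => (INR (beta j) * x j) ^ 2))
    by (intros; now rewrite matvec_Dhalf).
  rewrite sum_n_m_Rmult_l. eapply Rle_trans.
  - apply Rmult_le_compat_l; [apply pow2_ge_0 |].
    apply (sum_sqr_RInt_moment_le _ _ _ ((1 + p0) / 2) ((1 + p0) / 2));
      [lra | lra | apply Thetat_orthogonal | apply Thetat_conj_orthogonal]; lia.
  - right. cbv beta. field. lra.
Qed.

Lemma vnorm_UTmat_le N1 x :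
  vnorm N1 (matvec N1 (UTmat R0 p0) x) <= PI * vnorm N1 (matvec N1 Dhalf x).
Proof.
  pose proof PI_RGT_0. unfold vnorm.
  rewrite <- (sqrt_pow2 PI), <- sqrt_mult_alt by (lra || apply pow2_ge_0).
  apply sqrt_le_1_alt, sum_sqr_matvec_UTmat_le.
Qed.

End Thetat.

Lemma opnorm_le_scal N1 (A B : nat -> nat -> R) (C : R) : 0 < C ->
  (forall x, vnorm N1 x <= 1 -> vnorm N1 (matvec N1 A x) <= C * vnorm N1 (matvec N1 B x)) ->
  Rbar_le (opnorm N1 A) (Rbar_mult C (opnorm N1 B)).
Proof.
  intros HC HAB. unfold opnorm.
  destruct (Lub_Rbar_correct (fun r => exists x,
              vnorm N1 x <= 1 /\ r = vnorm N1 (matvec N1 B x))) as [HubB _].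
  apply (proj2 (Lub_Rbar_correct _)). intros r [x [Hx ->]].
  specialize (HubB _ (ex_intro _ x (conj Hx eq_refl))).
  destruct (Lub_Rbar _) as [d| |]; simpl in HubB.
  - simpl. eapply Rle_trans; [now apply HAB |]. now apply Rmult_le_compat_l; [lra |].
  - rewrite Rbar_mult_comm, (is_Rbar_mult_unique _ _ _ (is_Rbar_mult_p_infty_pos C HC)).
    exact I.
  - contradiction.
Qed.

Theorem lemma4p8 :
  forall (R0 p0 : R), 0 < R0 -> -1/2 < p0 ->
  exists C : R, 0 < C /\
    forall N1 : nat, (4 <= N1)%nat ->
      Rbar_le (opnorm N1 (UTmat R0 p0))
              (Rbar_mult (Finite C) (opnorm N1 Dhalf)).
Proof.
  intros R0 p0 HR0 Hp0. exists PI. split; [exact PI_RGT_0 |].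
  intros N1 _. apply opnorm_le_scal; [exact PI_RGT_0 |].
  intros x _. now apply vnorm_UTmat_le.
Qed.
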